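(* Let $\phi_T(t)=\frac{\tanh t}{t}$ (the hyperbolic-tangent characteristic function), whose Khintchine pair is $[0,m_T]$ with $m_T(dx)=\frac12\frac{|x|}{1+x^2}\frac{e^{-\pi|x|/4}}{\cosh(\pi|x|/4)}dx$. Its free analogue $\tilde\phi_T$ has Voiculescu transform $$V_{\tilde\phi_T}(it)=it\big[\ln(t/2)-\beta(t/2)-\psi(t/2)\big]=it\big[\ln(t/4)-\psi(t/4+1/2)\big],\qquad t>0.$$ Consequently, $2\psi(2s)-\psi(s)-\psi(s+1/2)=2\ln2$ for all $s>0$.
   Context: $\psi=\Gamma'/\Gamma$ is the digamma function and $\beta(x):=\sum_{k=0}^\infty\frac{(-1)^k}{x+k}=\frac12[\psi(\frac{x+1}{2})-\psi(\frac x2)]$ for $x>0$. For an infinitely divisible characteristic function $\phi$ with Khintchine exponent $\log\phi$ (continuous logarithm, $\log\phi(0)=0$), its free analogue $\tilde\phi$ is the $\boxplus$-infinitely divisible probability measure whose Voiculescu transform satisfies $V_{\tilde\phi}(it)=it^2\int_0^\infty\overline{\log\phi(s)}e^{-ts}ds$, $t>0$; if $\phi$ has Khintchine pair $[0,m]$ with $m$ symmetric, this equals $-it\int_{\mathbb{R}}\frac{1+x^2}{t^2+x^2}m(dx)$. *)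

From Stdlib Require Import Reals Lra ClassicalEpsilon.
Open Scope R_scope.

(* Digamma function psi = Gamma'/Gamma, via Gauss' limit formula
   psi(x) = lim_{n->oo} ( ln n - sum_{k=0}^{n} 1/(x+k) ),  x > 0.
   (Stdlib has no Gamma function.) *)
Definition digamma_seq (x : R) (n : nat) : R :=
  ln (INR n) - sum_f_R0 (fun k => / (x + INR k)) n.

Definition digamma (x : R) : R :=
  epsilon (inhabits 0) (fun y => Un_cv (digamma_seq x) y).

Definition beta_fun (x : R) : R :=
  epsilon (inhabits 0)
    (fun y => infinite_sum (fun k => (-1) ^ k / (x + INR k)) y).

Definition improper_int_0_infty (f : R -> R) (l : R) : Prop :=
  (forall b, 0 <= b -> inhabited (Riemann_integrable f 0 b)) /\
  (forall eps, eps > 0 -> exists B, forall b (pr : Riemann_integrable f 0 b),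
      B <= b -> Rabs (RiemannInt pr - l) < eps).

(* Hyperbolic-tangent characteristic function phi_T(t) = tanh t / t,
   with phi_T(0) = 1; it is real and positive, so its continuous
   logarithm is ln (phi_T t). *)
Definition phiT (t : R) : R := if Req_EM_T t 0 then 1 else tanh t / t.
Definition logphiT (t : R) : R := ln (phiT t).

(* Free analogue: V(it) = i t^2 int_0^oo conj(log phi(s)) e^{-ts} ds.
   For a real-valued log phi this is purely imaginary: V(it) = i * v with
   v = t^2 * int_0^oo log phi(s) e^{-ts} ds.
   [free_V_im logphi t v] says the integral converges and V(it) = i v. *)
Definition free_V_im (logphi : R -> R) (t v : R) : Prop :=
  exists L, improper_int_0_infty (fun s => logphi s * exp (- (t * s))) L
            /\ v = t ^ 2 * L.

(* Write [k(s) = (log phiT)'(s) = 2 / sinh (2 s) - 1 / s] for [s > 0]; [|k| <= 2] and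
   [log phiT (0) = 0], so integrating by parts turns [t int_0^b log phiT(s) e^{-ts} ds] into
   [A(t, b) = int_0^b k(s) e^{-ts} ds] up to a boundary term vanishing as [b -> oo], and
   [|A(q, b)| <= 2 / q].  Expanding [2 / sinh (2 s) = 4 sum_j e^{-(4 j + 2) s}] up to [j = n]
   and using Frullani's integral for the [1 / s] part gives, with [q = t + 4 (n + 1)],
   [A(t, b) - A(q, b) = 4 sum_{j <= n} 1 / (t + 2 + 4 j) - ln (q / t) + O(n e^{-tb} / t)].
   Letting [b -> oo] and then [n -> oo], Gauss' formula for [digamma] yields
   [A(t, oo) = ln (t / 4) - digamma (t / 4 + 1 / 2)].  The other form of the transform is the
   same number by [beta x = (digamma ((x + 1) / 2) - digamma (x / 2)) / 2] and Legendre's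
   duplication formula, both read off Gauss' partial sums. *)

From Stdlib Require Import Reals Lra Lia ClassicalEpsilon.
From Coquelicot Require Import Coquelicot.
Open Scope R_scope.

(* Coquelicot states these lemmas over an abstract normed module, with [plus], [scal] and
   equations in its carrier; the [_R] versions and [R_eq] restate them on [R] so that
   [rewrite], [ring] and [field] apply. *)
Ltac R_eq := match goal with |- @eq _ ?x ?y => change (@eq R x y) end.

Lemma RInt_plus_R f g a b : ex_RInt f a b -> ex_RInt g a b ->
  RInt (fun x => f x + g x) a b = RInt f a b + RInt g a b.
Proof. exact (RInt_plus f g a b). Qed.

Lemma RInt_minus_R f g a b : ex_RInt f a b -> ex_RInt g a b ->
  RInt (fun x => f x - g x) a b = RInt f a b - RInt g a b.
Proof. exact (RInt_minus f g a b). Qed.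

Lemma RInt_scal_R f c a b : ex_RInt f a b -> RInt (fun x => c * f x) a b = c * RInt f a b.
Proof. exact (RInt_scal f a b c). Qed.

Lemma RInt_Chasles_R f a b c : ex_RInt f a b -> ex_RInt f b c ->
  RInt f a b + RInt f b c = RInt f a c.
Proof. exact (RInt_Chasles f a b c). Qed.

Lemma ex_RInt_continuous_R (f : R -> R) a b :
  (forall x, Rmin a b <= x <= Rmax a b -> continuous f x) -> ex_RInt f a b.
Proof. exact (ex_RInt_continuous f a b). Qed.

Lemma ex_derive_continuous_R (f : R -> R) x : ex_derive f x -> continuous f x.
Proof. exact (ex_derive_continuous f x). Qed.

Lemma ln_le_sub_1 y : 0 < y -> ln y <= y - 1.
Proof. intros Hy. generalize (exp_ineq1_le (ln y)). rewrite exp_ln; lra. Qed.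

Lemma continuity_pt_ln x : 0 < x -> continuity_pt ln x.
Proof.
  intros Hx. apply derivable_continuous_pt. exists (/ x). now apply derivable_pt_lim_ln.
Qed.

Lemma is_lim_seq_inv_INR : is_lim_seq (fun n => / INR n) 0.
Proof.
  apply (is_lim_seq_inv _ p_infty (is_lim_seq_INR)). discriminate.
Qed.

Lemma is_lim_seq_inv_shift y : is_lim_seq (fun n => / (y + INR n)) 0.
Proof.
  apply (is_lim_seq_inv _ p_infty); [|discriminate].
  apply (is_lim_seq_plus _ _ y p_infty); [apply is_lim_seq_const|apply is_lim_seq_INR|].
  reflexivity.
Qed.

Lemma is_lim_seq_ln_shift a : -1 < a ->
  is_lim_seq (fun n => ln (INR n + a) - ln (INR n)) 0.
Proof.
  intros Ha.
  apply (is_lim_seq_ext_loc (fun n => ln (1 + a * / INR n))).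
  { exists 1%nat. intros n Hn. assert (1 <= INR n) by (apply (le_INR 1); lia).
    rewrite <- ln_div by lra. f_equal. field. lra. }
  rewrite <- ln_1. apply is_lim_seq_continuous; [apply continuity_pt_ln; lra|].
  replace (Finite 1) with (Finite (1 + a * 0)) by (f_equal; ring).
  apply is_lim_seq_plus'; [apply is_lim_seq_const|].
  apply (is_lim_seq_scal_l _ a 0), is_lim_seq_inv_INR.
Qed.

Lemma is_lim_seq_unique_R u (l1 l2 : R) :
  is_lim_seq u l1 -> is_lim_seq u l2 -> l1 = l2.
Proof.
  intros H1 H2. apply is_lim_seq_unique in H1, H2. rewrite H1 in H2. now injection H2.
Qed.

Lemma is_lim_seq_odd u l :
  is_lim_seq u l -> is_lim_seq (fun n => u (2 * n + 1)%nat) l.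
Proof. apply is_lim_seq_subseq, eventually_subseq. intro n. lia. Qed.

Lemma is_lim_seq_sum_f_R0 (F : nat -> nat -> R) (l : nat -> R) n :
  (forall j, is_lim_seq (F j) (l j)) ->
  is_lim_seq (fun m => sum_f_R0 (fun j => F j m) n) (sum_f_R0 l n).
Proof.
  intros H. induction n as [|n IH]; [apply H|]. apply is_lim_seq_plus'; auto.
Qed.

Lemma sum_f_R0_bounds (f : nat -> R) K n :
  (forall j, 0 <= f j <= K) -> 0 <= sum_f_R0 f n <= INR (S n) * K.
Proof.
  intros H. induction n as [|n IH]; [simpl; rewrite Rmult_1_l; apply H|].
  rewrite tech5, (S_INR (S n)). specialize (H (S n)). lra.
Qed.

Lemma sum_f_R0_pairs f n :
  sum_f_R0 f (2 * n + 1) = sum_f_R0 (fun j => f (2 * j)%nat + f (2 * j + 1)%nat) n.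
Proof.
  induction n as [|n IH]; [reflexivity|].
  replace (2 * S n + 1)%nat with (S (S (2 * n + 1))) by lia.
  cbn [sum_f_R0]. rewrite IH.
  replace (S (2 * n + 1)) with (2 * S n)%nat by lia.
  replace (S (2 * S n)) with (2 * S n + 1)%nat by lia. ring.
Qed.

(** * Digamma and beta *)

Lemma digamma_seq_S x n : digamma_seq x (S n) =
  digamma_seq x n + (ln (INR (S n)) - ln (INR n)) - / (x + INR (S n)).
Proof. unfold digamma_seq. cbn [sum_f_R0]. ring. Qed.

Lemma ln_S_sub_ln_bounds n : (1 <= n)%nat ->
  / INR (S n) <= ln (INR (S n)) - ln (INR n) <= / INR n.
Proof.
  intros Hn. assert (1 <= INR n) by (apply (le_INR 1); lia). rewrite S_INR. split.
  - assert (L := ln_le_sub_1 (INR n / (INR n + 1)) ltac:(apply Rdiv_lt_0_compat; lra)).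
    rewrite ln_div in L by lra.
    replace (INR n / (INR n + 1) - 1) with (- / (INR n + 1)) in L by (field; lra). lra.
  - assert (L := ln_le_sub_1 ((INR n + 1) / INR n) ltac:(apply Rdiv_lt_0_compat; lra)).
    rewrite ln_div in L by lra.
    replace ((INR n + 1) / INR n - 1) with (/ INR n) in L by (field; lra). lra.
Qed.

(* From index 1 on, [digamma_seq x] increases and [digamma_seq x n + (x+1)/n] decreases. *)
Lemma ex_lim_digamma_seq x : 0 < x -> exists l : R, is_lim_seq (digamma_seq x) l.
Proof.
  intros Hx. set (u := fun n => digamma_seq x (S n)).
  assert (Hstep : forall n,
    0 <= u (S n) - u n <= (x + 1) * (/ INR (S n) - / INR (S (S n)))).
  { intro n. unfold u. rewrite (digamma_seq_S x (S n)).
    destruct (ln_S_sub_ln_bounds (S n)) as [L1 L2]; [lia|].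
    assert (0 < INR (S n)) by (apply lt_0_INR; lia).
    rewrite (S_INR (S n)) in *.
    assert (/ (x + (INR (S n) + 1)) <= / (INR (S n) + 1)) by (apply Rinv_le_contravar; lra).
    split; [lra|].
    replace ((x + 1) * (/ INR (S n) - / (INR (S n) + 1)))
      with ((x + 1) / (INR (S n) * (INR (S n) + 1))) by (field; lra).
    assert (/ INR (S n) - / (x + (INR (S n) + 1))
            = (x + 1) / (INR (S n) * (x + (INR (S n) + 1)))) by (field; lra).
    enough ((x + 1) / (INR (S n) * (x + (INR (S n) + 1)))
            <= (x + 1) / (INR (S n) * (INR (S n) + 1))) by lra.
    apply Rmult_le_compat_l; [lra|]. apply Rinv_le_contravar.
    - apply Rmult_lt_0_compat; lra.
    - apply Rmult_le_compat_l; lra. }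
  assert (Hub : forall n, u n + (x + 1) * / INR (S n) <= u O + (x + 1)).
  { induction n as [|n IH]; [simpl; rewrite Rinv_1; lra|].
    specialize (Hstep n). lra. }
  destruct (ex_finite_lim_seq_incr u (u O + (x + 1))) as [l Hl].
  - intro n. specialize (Hstep n). lra.
  - intro n. specialize (Hub n).
    assert (0 < / INR (S n)) by (apply Rinv_0_lt_compat, lt_0_INR; lia). nra.
  - exists l. now apply is_lim_seq_incr_1.
Qed.

Lemma is_lim_seq_digamma x : 0 < x -> is_lim_seq (digamma_seq x) (digamma x).
Proof.
  intros Hx. apply is_lim_seq_Reals. unfold digamma. apply epsilon_spec.
  destruct (ex_lim_digamma_seq x Hx) as [l Hl]. exists l. now apply is_lim_seq_Reals.
Qed.

Lemma digamma_seq_duplication s n : 0 < s -> (1 <= n)%nat ->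
  2 * digamma_seq (2 * s) (2 * n + 1) - digamma_seq s n - digamma_seq (s + 1 / 2) n
  = 2 * ln 2 + 2 * (ln (INR n + 1 / 2) - ln (INR n)).
Proof.
  intros Hs Hn. assert (1 <= INR n) by (apply (le_INR 1); lia).
  unfold digamma_seq. rewrite sum_f_R0_pairs.
  rewrite (sum_eq _ (fun j => / (s + INR j) * / 2 + / (s + 1 / 2 + INR j) * / 2)).
  2:{ intros j _. rewrite plus_INR, mult_INR. simpl INR.
      assert (0 <= INR j) by apply pos_INR. field. lra. }
  rewrite plus_sum, <- !scal_sum.
  replace (INR (2 * n + 1)) with (2 * (INR n + 1 / 2))
    by (rewrite plus_INR, mult_INR; simpl; field).
  rewrite ln_mult by lra. lra.
Qed.

Theorem digamma_duplication s : 0 < s ->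
  2 * digamma (2 * s) - digamma s - digamma (s + 1 / 2) = 2 * ln 2.
Proof.
  intros Hs.
  apply (is_lim_seq_unique_R (fun n =>
    2 * digamma_seq (2 * s) (2 * n + 1) - digamma_seq s n - digamma_seq (s + 1 / 2) n)).
  - apply is_lim_seq_minus'; [apply is_lim_seq_minus'|].
    + apply (is_lim_seq_scal_l _ 2 (digamma (2 * s))), is_lim_seq_odd.
      apply is_lim_seq_digamma; lra.
    + now apply is_lim_seq_digamma.
    + apply is_lim_seq_digamma; lra.
  - apply (is_lim_seq_ext_loc (fun n => 2 * ln 2 + 2 * (ln (INR n + 1 / 2) - ln (INR n)))).
    { exists 1%nat. intros n Hn. symmetry. now apply digamma_seq_duplication. }
    replace (Finite (2 * ln 2)) with (Finite (2 * ln 2 + 2 * 0)) by (f_equal; ring).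
    apply is_lim_seq_plus'; [apply is_lim_seq_const|].
    apply (is_lim_seq_scal_l _ 2 0), is_lim_seq_ln_shift. lra.
Qed.

Lemma alternating_sum_digamma_seq y n : 0 < y ->
  sum_f_R0 (fun k => (-1) ^ k / (y + INR k)) (2 * n + 1) =
  / 2 * (digamma_seq ((y + 1) / 2) n - digamma_seq (y / 2) n).
Proof.
  intros Hy. unfold digamma_seq. rewrite sum_f_R0_pairs.
  rewrite (sum_eq _ (fun j => / (y / 2 + INR j) * / 2 - / ((y + 1) / 2 + INR j) * / 2)).
  - rewrite minus_sum, <- !scal_sum. lra.
  - intros j _. replace (2 * j + 1)%nat with (S (2 * j)) by lia.
    rewrite pow_1_odd, pow_1_even, S_INR, mult_INR. simpl INR.
    assert (0 <= INR j) by apply pos_INR. field. lra.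
Qed.

Lemma beta_fun_digamma y : 0 < y ->
  beta_fun y = / 2 * (digamma ((y + 1) / 2) - digamma (y / 2)).
Proof.
  intros Hy.
  assert (Hbeta : is_lim_seq (sum_f_R0 (fun k => (-1) ^ k / (y + INR k))) (beta_fun y)).
  { apply is_lim_seq_Reals. unfold beta_fun. apply epsilon_spec.
    destruct (alternated_series (fun n => / (y + INR n))) as [l Hl].
    - intro n. apply Rinv_le_contravar; rewrite ?S_INR; generalize (pos_INR n); lra.
    - now apply is_lim_seq_Reals, is_lim_seq_inv_shift.
    - now exists l. }
  apply (is_lim_seq_unique_R (fun n => sum_f_R0 (fun k => (-1) ^ k / (y + INR k)) (2 * n + 1))).
  - now apply is_lim_seq_odd.
  - apply (is_lim_seq_ext (fun n => / 2 * (digamma_seq ((y + 1) / 2) n - digamma_seq (y / 2) n))).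
    { intro n. symmetry. now apply alternating_sum_digamma_seq. }
    apply (is_lim_seq_scal_l _ (/ 2) (digamma ((y + 1) / 2) - digamma (y / 2))).
    apply is_lim_seq_minus'; apply is_lim_seq_digamma; lra.
Qed.

Lemma free_V_forms_agree t : 0 < t ->
  ln (t / 2) - beta_fun (t / 2) - digamma (t / 2) = ln (t / 4) - digamma (t / 4 + 1 / 2).
Proof.
  intros Ht. rewrite beta_fun_digamma by lra.
  replace ((t / 2 + 1) / 2) with (t / 4 + 1 / 2) by field.
  replace (t / 2 / 2) with (t / 4) by field.
  assert (D := digamma_duplication (t / 4) ltac:(lra)).
  replace (2 * (t / 4)) with (t / 2) in D by field.
  replace (t / 2) with (2 * (t / 4)) at 1 by field.
  rewrite ln_mult by lra. lra.
Qed.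

(** * The logarithmic derivative of [phiT] *)

Lemma sinh_ge x : 0 < x -> x / (1 + x) <= sinh x.
Proof.
  intros Hx. unfold sinh. rewrite exp_Ropp.
  assert (E := exp_ineq1_le x).
  assert (/ exp x <= / (1 + x)) by (apply Rinv_le_contravar; lra).
  replace (x / (1 + x)) with ((1 + x - / (1 + x)) / 2 - x * x / (2 * (1 + x))) by (field; lra).
  assert (0 <= x * x / (2 * (1 + x))) by (apply Rle_mult_inv_pos; nra).
  lra.
Qed.

Lemma sinh_le x : 0 < x < 1 -> sinh x <= x / (1 - x).
Proof.
  intros Hx. unfold sinh.
  assert (E := exp_ineq1_le (- x)).
  assert (P := exp_pos (- x)).
  assert (exp x <= / (1 - x)).
  { rewrite <- (Rinv_inv (exp x)), <- exp_Ropp. apply Rinv_le_contravar; lra. }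
  replace (x / (1 - x)) with ((/ (1 - x) - (1 - x)) / 2 + x * x / (2 * (1 - x))) by (field; lra).
  assert (0 <= x * x / (2 * (1 - x))) by (apply Rle_mult_inv_pos; nra).
  lra.
Qed.

Definition dlogphiT (s : R) : R := 2 / sinh (2 * s) - / s.

Lemma Rabs_dlogphiT_le s : 0 < s -> Rabs (dlogphiT s) <= 2.
Proof.
  intros Hs. unfold dlogphiT. set (x := 2 * s).
  assert (Hx : 0 < x) by (unfold x; lra).
  assert (Lo := sinh_ge x Hx).
  assert (Px : 0 < x / (1 + x)) by (apply Rdiv_lt_0_compat; lra).
  replace (/ s) with (2 / x) by (unfold x; field; lra).
  apply Rabs_le. split.
  - destruct (Rlt_le_dec x 1) as [Hx1|Hx1].
    + assert (Up := sinh_le x (conj Hx Hx1)).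
      assert (/ (x / (1 - x)) <= / sinh x) by (apply Rinv_le_contravar; lra).
      replace (/ (x / (1 - x))) with (/ x - 1) in H by (field; lra).
      unfold Rdiv in *. lra.
    + assert (0 < / sinh x) by (apply Rinv_0_lt_compat; lra).
      assert (/ x <= 1) by (rewrite <- Rinv_1; apply Rinv_le_contravar; lra).
      unfold Rdiv. lra.
  - assert (/ sinh x <= / (x / (1 + x))) by (apply Rinv_le_contravar; lra).
    replace (/ (x / (1 + x))) with (/ x + 1) in H by (field; lra).
    assert (0 < / x) by (apply Rinv_0_lt_compat; lra).
    unfold Rdiv. lra.
Qed.

Lemma logphiT_as_exp s : s <> 0 ->
  logphiT s = ln ((exp s - exp (- s)) / (exp s + exp (- s)) / s).
Proof.
  intros Hs. unfold logphiT, phiT. destruct (Req_EM_T s 0); [contradiction|].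
  unfold tanh, sinh, cosh. f_equal. field. split; auto.
  generalize (exp_pos s) (exp_pos (- s)); lra.
Qed.

Lemma is_derive_logphiT s : 0 < s -> is_derive logphiT s (dlogphiT s).
Proof.
  intros Hs.
  apply (is_derive_ext_loc (fun y => ln ((exp y - exp (- y)) / (exp y + exp (- y)) / y))).
  { apply filter_imp with (P := fun y => 0 < y); [|now apply (open_gt 0 s)].
    intros y Hy. symmetry. apply logphiT_as_exp. lra. }
  assert (X1 : 1 < exp s) by (rewrite <- exp_0; now apply exp_increasing). assert (Xp := exp_pos s).
  assert (E2 : exp (2 * s) = exp s * exp s) by (rewrite <- exp_plus; f_equal; ring).
  auto_derive.
  - rewrite exp_Ropp.
    assert (/ exp s < 1) by (rewrite <- Rinv_1; apply Rinv_lt_contravar; lra).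
    assert (0 < / exp s) by (apply Rinv_0_lt_compat; lra).
    repeat split; try lra.
    apply Rdiv_lt_0_compat; [apply Rdiv_lt_0_compat|]; lra.
  - unfold dlogphiT, sinh. rewrite !exp_Ropp, E2. set (X := exp s) in *.
    assert (X * X > 1) by nra.
    field. repeat split; nra.
Qed.

Lemma continuous_dlogphiT s : 0 < s -> continuous dlogphiT s.
Proof.
  intros Hs. apply ex_derive_continuous_R.
  unfold dlogphiT, sinh.
  assert (exp (- (2 * s)) < exp (2 * s)) by (apply exp_increasing; lra).
  auto_derive. lra.
Qed.

(* [phiT] is the difference quotient of [tanh] at [0], and [tanh' 0 = 1]. *)
Lemma continuity_pt_phiT_0 : continuity_pt phiT 0.
Proof.
  set (th := fun y => (exp y - exp (- y)) / (exp y + exp (- y))).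
  assert (D : derivable_pt_lim th 0 1).
  { apply is_derive_Reals. unfold th. auto_derive; rewrite Ropp_0, exp_0; [lra|field]. }
  intros eps Heps. destruct (D eps Heps) as [del Hdel].
  exists del. split; [apply cond_pos|]. intros x [[_ Hx0] Hx].
  simpl in *. unfold R_dist in *. rewrite Rminus_0_r in Hx.
  specialize (Hdel x (not_eq_sym Hx0) Hx). rewrite Rplus_0_l in Hdel.
  replace (th 0) with 0 in Hdel by (unfold th; rewrite Ropp_0, exp_0; field).
  unfold phiT. destruct (Req_EM_T x 0); [congruence|]. destruct (Req_EM_T 0 0); [|congruence].
  replace (tanh x) with (th x); [now rewrite Rminus_0_r in Hdel|].
  unfold th, tanh, sinh, cosh. field. generalize (exp_pos x) (exp_pos (- x)); lra.
Qed.

Lemma continuous_logphiT s : 0 <= s -> continuous logphiT s.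
Proof.
  intros [Hs|<-].
  - apply ex_derive_continuous_R.
    eexists. now apply is_derive_logphiT.
  - apply continuity_pt_filterlim, (continuity_pt_comp phiT ln); [apply continuity_pt_phiT_0|].
    unfold phiT. destruct (Req_EM_T 0 0); [|congruence]. apply continuity_pt_ln. lra.
Qed.

Lemma logphiT_0 : logphiT 0 = 0.
Proof. unfold logphiT, phiT. destruct (Req_EM_T 0 0); [apply ln_1|congruence]. Qed.

Lemma Rabs_logphiT_le b : 0 < b -> Rabs (logphiT b) <= 2 * b.
Proof.
  intros Hb.
  destruct (MVT_gen logphiT 0 b dlogphiT) as [c [Hc E]].
  - intros x Hx. rewrite Rmin_left, Rmax_right in Hx by lra. apply is_derive_logphiT. lra.
  - intros x Hx. rewrite Rmin_left, Rmax_right in Hx by lra.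
    apply continuity_pt_filterlim, continuous_logphiT. lra.
  - rewrite Rmin_left, Rmax_right in Hc by lra.
    rewrite logphiT_0, Rminus_0_r, Rminus_0_r in E. rewrite E, Rabs_mult, (Rabs_right b) by lra.
    apply Rmult_le_compat_r; [lra|].
    destruct (Req_dec c 0) as [->|Hc0].
    + (* the mean value point may be [0], where [dlogphiT 0 = 0] because [/ 0 = 0] *)
      unfold dlogphiT. rewrite Rmult_0_r, sinh_0, Rinv_0.
      unfold Rdiv. rewrite Rinv_0, Rmult_0_r, Rminus_0_r, Rabs_R0. lra.
    + apply Rabs_dlogphiT_le. lra.
Qed.

(** * Integrals *)

Lemma RInt_by_parts f df g dg a b : a <= b ->
  (forall x, a <= x <= b -> is_derive f x (df x)) ->
  (forall x, a <= x <= b -> is_derive g x (dg x)) ->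
  (forall x, a <= x <= b -> continuous df x) ->
  (forall x, a <= x <= b -> continuous dg x) ->
  RInt (fun x => df x * g x) a b = f b * g b - f a * g a - RInt (fun x => f x * dg x) a b.
Proof.
  intros Hab Hf Hg Cdf Cdg.
  assert (Cf : forall x, a <= x <= b -> continuous f x)
    by (intros x Hx; apply ex_derive_continuous_R; eexists; now apply Hf).
  assert (Cg : forall x, a <= x <= b -> continuous g x)
    by (intros x Hx; apply ex_derive_continuous_R; eexists; now apply Hg).
  assert (I1 : ex_RInt (fun x => df x * g x) a b).
  { apply ex_RInt_continuous_R. rewrite Rmin_left, Rmax_right by lra.
    intros x Hx. apply (continuous_mult df g); auto. }
  assert (I2 : ex_RInt (fun x => f x * dg x) a b).
  { apply ex_RInt_continuous_R. rewrite Rmin_left, Rmax_right by lra.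
    intros x Hx. apply (continuous_mult f dg); auto. }
  assert (F : is_RInt (fun x => df x * g x + f x * dg x) a b (f b * g b - f a * g a)).
  { apply (is_RInt_derive (fun x => f x * g x)); rewrite Rmin_left, Rmax_right by lra.
    - intros x Hx. apply (is_derive_mult f g); auto. intros; apply Rmult_comm.
    - intros x Hx. apply (continuous_plus (fun x => df x * g x) (fun x => f x * dg x)).
      + apply (continuous_mult df g); auto.
      + apply (continuous_mult f dg); auto. }
  apply (@is_RInt_unique R_CompleteNormedModule) in F. rewrite RInt_plus_R in F by assumption. lra.
Qed.

Lemma RInt_exp_lin c a b : c <> 0 ->
  RInt (fun s => exp (- (c * s))) a b = (exp (- (c * a)) - exp (- (c * b))) / c.
Proof.
  intros Hc. apply is_RInt_unique.
  replace ((exp (- (c * a)) - exp (- (c * b))) / c)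
    with (- exp (- (c * b)) / c - - exp (- (c * a)) / c) by (field; auto).
  apply (is_RInt_derive (fun s => - exp (- (c * s)) / c)).
  - intros x _. auto_derive; [auto|field; auto].
  - intros x _. apply ex_derive_continuous_R. auto_derive. auto.
Qed.

Lemma continuous_exp_lin c s : continuous (fun s => exp (- (c * s))) s.
Proof. apply ex_derive_continuous_R. auto_derive. auto. Qed.

Lemma ex_RInt_exp_lin c a b : ex_RInt (fun s => exp (- (c * s))) a b.
Proof.
  apply ex_RInt_continuous_R. intros x _. apply continuous_exp_lin.
Qed.

Lemma ex_RInt_sum_f_R0 (F : nat -> R -> R) a b n :
  (forall j, ex_RInt (F j) a b) -> ex_RInt (fun s => sum_f_R0 (fun j => F j s) n) a b.
Proof.
  intros H. induction n as [|n IH]; [apply H|].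
  apply (ex_RInt_plus (fun s => sum_f_R0 (fun j => F j s) n) (F (S n))); auto.
Qed.

Lemma RInt_sum_f_R0 (F : nat -> R -> R) a b n :
  (forall j, ex_RInt (F j) a b) ->
  RInt (fun s => sum_f_R0 (fun j => F j s) n) a b = sum_f_R0 (fun j => RInt (F j) a b) n.
Proof.
  intros H. induction n as [|n IH]; [reflexivity|].
  cbn [sum_f_R0]. rewrite <- IH.
  apply (RInt_plus_R (fun s => sum_f_R0 (fun j => F j s) n) (F (S n))); auto.
  now apply ex_RInt_sum_f_R0.
Qed.

Lemma Rmin_pos_le a b x : 0 < a -> 0 < b -> Rmin a b <= x -> 0 < x.
Proof. intros Ha Hb Hx. apply (Rlt_le_trans _ (Rmin a b)); auto. now apply Rmin_glb_lt. Qed.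

Definition E1_integrand (w : R) : R := exp (- w) / w.

Lemma continuous_exp_lin_div c x : x <> 0 -> continuous (fun s => exp (- (c * s)) / s) x.
Proof. intros Hx. apply ex_derive_continuous_R. auto_derive. auto. Qed.

Lemma ex_RInt_exp_lin_div c a b : 0 < a -> 0 < b -> ex_RInt (fun s => exp (- (c * s)) / s) a b.
Proof.
  intros Ha Hb. apply ex_RInt_continuous_R. intros x [Hx _].
  apply continuous_exp_lin_div, Rgt_not_eq, (Rmin_pos_le a b); auto.
Qed.

Lemma ex_RInt_E1_integrand a b : 0 < a -> 0 < b -> ex_RInt E1_integrand a b.
Proof.
  intros Ha Hb. apply (ex_RInt_ext (fun s => exp (- (1 * s)) / s)).
  - intros x _. unfold E1_integrand. now rewrite Rmult_1_l.
  - now apply ex_RInt_exp_lin_div.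
Qed.

Lemma RInt_exp_lin_div p e b : 0 < p -> 0 < e -> 0 < b ->
  RInt (fun s => exp (- (p * s)) / s) e b = RInt E1_integrand (p * e) (p * b).
Proof.
  intros Hp He Hb.
  assert (Hex : ex_RInt E1_integrand (p * e + 0) (p * b + 0)).
  { rewrite !Rplus_0_r. apply ex_RInt_E1_integrand; now apply Rmult_lt_0_compat. }
  assert (C := RInt_comp_lin E1_integrand p 0 e b Hex). rewrite !Rplus_0_r in C.
  rewrite <- C. apply RInt_ext. intros x [Hx _].
  assert (0 < x) by (apply (Rmin_pos_le e b); lra).
  unfold E1_integrand, scal; simpl; unfold mult; simpl. rewrite Rplus_0_r. field. lra.
Qed.

Lemma RInt_frullani p q e b : 0 < p -> 0 < q -> 0 < e -> 0 < b ->
  RInt (fun s => (exp (- (p * s)) - exp (- (q * s))) / s) e b =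
  RInt E1_integrand (p * e) (q * e) - RInt E1_integrand (p * b) (q * b).
Proof.
  intros Hp Hq He Hb.
  rewrite (RInt_ext _ (fun s => exp (- (p * s)) / s - exp (- (q * s)) / s))
    by (intros x _; R_eq; unfold Rdiv; ring).
  rewrite RInt_minus_R, !RInt_exp_lin_div by (try apply ex_RInt_exp_lin_div; lra).
  assert (I : forall u v w z, 0 < u -> 0 < v -> 0 < w -> 0 < z ->
              ex_RInt E1_integrand (u * w) (v * z))
    by (intros; apply ex_RInt_E1_integrand; now apply Rmult_lt_0_compat).
  rewrite <- (RInt_Chasles_R E1_integrand (p * e) (q * e) (p * b)) by auto.
  rewrite <- (RInt_Chasles_R E1_integrand (q * e) (p * b) (q * b)) by auto.
  R_eq. ring.
Qed.

Lemma RInt_inv a b : 0 < a -> a <= b -> RInt Rinv a b = ln b - ln a.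
Proof.
  intros Ha Hab. apply is_RInt_unique, (is_RInt_derive ln).
  - intros x Hx. rewrite Rmin_left in Hx by lra. auto_derive; [lra|field; lra].
  - intros x Hx. rewrite Rmin_left in Hx by lra.
    apply ex_derive_continuous_R. auto_derive. lra.
Qed.

Lemma RInt_E1_integrand_near_0 p q e : 0 < p < q -> 0 < e ->
  exp (- (q * e)) * (ln q - ln p) <= RInt E1_integrand (p * e) (q * e) <= ln q - ln p.
Proof.
  intros Hpq He.
  assert (Hpe : 0 < p * e) by (apply Rmult_lt_0_compat; lra).
  assert (Hle : p * e <= q * e) by (apply Rmult_le_compat_r; lra).
  assert (Hln : ln (q * e) - ln (p * e) = ln q - ln p) by (rewrite !ln_mult; lra).
  assert (Iinv : ex_RInt Rinv (p * e) (q * e)).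
  { apply ex_RInt_continuous_R. rewrite Rmin_left by lra. intros z [Hz _].
    apply ex_derive_continuous_R. auto_derive. lra. }
  assert (IE := ex_RInt_E1_integrand (p * e) (q * e) Hpe ltac:(lra)).
  rewrite <- Hln, <- RInt_inv by lra. split.
  - rewrite <- RInt_scal_R by exact Iinv.
    apply RInt_le; auto; [now apply (ex_RInt_scal Rinv)|].
    intros x Hx. unfold E1_integrand, Rdiv.
    apply Rmult_le_compat_r; [left; apply Rinv_0_lt_compat; lra|].
    left. apply exp_increasing. lra.
  - apply RInt_le; auto.
    intros x Hx. unfold E1_integrand, Rdiv. rewrite <- (Rmult_1_l (/ x)) at 2.
    apply Rmult_le_compat_r; [left; apply Rinv_0_lt_compat; lra|].
    rewrite <- exp_0. left. apply exp_increasing. lra.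
Qed.

Lemma is_lim_seq_exp_lin c e : is_lim_seq e 0 -> is_lim_seq (fun m => exp (- (c * e m))) 1.
Proof.
  intros Le. replace 1 with (exp (- (c * 0))) by (rewrite Rmult_0_r, Ropp_0; apply exp_0).
  apply (is_lim_seq_continuous (fun x => exp (- (c * x)))); auto.
  apply continuity_pt_filterlim, continuous_exp_lin.
Qed.

Lemma is_lim_seq_RInt_E1_integrand_near_0 p q (e : nat -> R) :
  0 < p < q -> (forall m, 0 < e m) -> is_lim_seq e 0 ->
  is_lim_seq (fun m => RInt E1_integrand (p * e m) (q * e m)) (ln q - ln p).
Proof.
  intros Hpq He Le.
  apply (is_lim_seq_le_le (fun m => exp (- (q * e m)) * (ln q - ln p)) _ (fun _ => ln q - ln p)).
  - intro m. now apply RInt_E1_integrand_near_0.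
  - replace (Finite (ln q - ln p)) with (Finite (1 * (ln q - ln p))) by (f_equal; ring).
    apply (is_lim_seq_scal_r _ (ln q - ln p) 1), is_lim_seq_exp_lin, Le.
  - apply is_lim_seq_const.
Qed.

Lemma RInt_E1_integrand_far p q b : 0 < p < q -> 0 < b ->
  0 <= RInt E1_integrand (p * b) (q * b) <= (q - p) / p * exp (- (p * b)).
Proof.
  intros Hpq Hb.
  assert (Hpb : 0 < p * b) by (apply Rmult_lt_0_compat; lra).
  assert (Hle : p * b <= q * b) by (apply Rmult_le_compat_r; lra).
  assert (IE := ex_RInt_E1_integrand (p * b) (q * b) Hpb ltac:(lra)).
  split.
  - apply RInt_ge_0; auto. intros x Hx. unfold E1_integrand.
    apply Rlt_le, Rdiv_lt_0_compat; [apply exp_pos|lra].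
  - replace ((q - p) / p * exp (- (p * b)))
      with (RInt (fun _ => exp (- (p * b)) / (p * b)) (p * b) (q * b))
      by (rewrite RInt_const; R_eq; unfold scal; simpl; unfold mult; simpl; field; lra).
    apply RInt_le; auto; [apply ex_RInt_const|].
    intros x Hx. unfold E1_integrand, Rdiv. apply Rmult_le_compat.
    + left; apply exp_pos.
    + left; apply Rinv_0_lt_compat; lra.
    + left; apply exp_increasing; lra.
    + apply Rinv_le_contravar; lra.
Qed.

Lemma is_lim_seq_RInt_shrinking f a (x : nat -> R) :
  continuity_pt f a -> (forall m, a <= x m) -> (forall m, ex_RInt f a (x m)) ->
  is_lim_seq x a -> is_lim_seq (fun m => RInt f a (x m)) 0.
Proof.
  intros Cf Hx Ix Lx.
  destruct (Cf 1 Rlt_0_1) as [d [Hd Hf]].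
  set (M := Rabs (f a) + 1).
  assert (Hb : forall y, a <= y < a + d -> Rabs (f y) <= M).
  { intros y Hy. destruct (Req_dec y a) as [->|Hya]; [unfold M; lra|].
    assert (Hfy : R_dist (f y) (f a) < 1).
    { apply Hf. split; [split; [exact I|auto]|].
      simpl. unfold R_dist. rewrite Rabs_right; lra. }
    unfold R_dist in Hfy. unfold M.
    generalize (Rabs_triang_inv (f y) (f a)). lra. }
  apply is_lim_seq_abs_0.
  apply (is_lim_seq_le_le_loc (fun _ => 0) _ (fun m => (x m - a) * M)).
  - apply is_lim_seq_spec in Lx. destruct (Lx (mkposreal d Hd)) as [N HN].
    exists N. intros m Hm. specialize (HN m Hm). simpl in HN.
    split; [apply Rabs_pos|].
    apply abs_RInt_le_const; auto. intros y Hy. apply Hb.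
    specialize (Hx m). rewrite Rabs_right in HN; lra.
  - apply is_lim_seq_const.
  - replace (Finite 0) with (Rbar_mult (Rbar_minus a a) M)
      by (simpl; f_equal; ring).
    apply is_lim_seq_scal_r, (is_lim_seq_minus _ _ a a); auto using is_lim_seq_const.
    reflexivity.
Qed.

(** * The Laplace transform of [logphiT] *)

Definition logphiT_exp (p s : R) : R := logphiT s * exp (- (p * s)).
Definition dlogphiT_exp (p s : R) : R := dlogphiT s * exp (- (p * s)).

Lemma continuous_logphiT_exp p s : 0 <= s -> continuous (logphiT_exp p) s.
Proof.
  intros Hs. apply (continuous_mult logphiT (fun s => exp (- (p * s)))).
  - now apply continuous_logphiT.
  - apply continuous_exp_lin.
Qed.

Lemma ex_RInt_logphiT_exp p a b : 0 <= a -> 0 <= b -> ex_RInt (logphiT_exp p) a b.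
Proof.
  intros Ha Hb. apply ex_RInt_continuous_R. intros x [Hx _].
  apply continuous_logphiT_exp. apply (Rle_trans _ (Rmin a b)); auto. now apply Rmin_glb.
Qed.

Lemma ex_RInt_dlogphiT_exp p a b : 0 < a -> 0 < b -> ex_RInt (dlogphiT_exp p) a b.
Proof.
  intros Ha Hb. apply ex_RInt_continuous_R. intros x [Hx _].
  apply (continuous_mult dlogphiT (fun s => exp (- (p * s)))).
  - apply continuous_dlogphiT, (Rmin_pos_le a b); auto.
  - apply continuous_exp_lin.
Qed.

Lemma RInt_dlogphiT_exp_by_parts p e b : 0 < e <= b ->
  RInt (dlogphiT_exp p) e b = p * RInt (logphiT_exp p) e b
    + logphiT b * exp (- (p * b)) - logphiT e * exp (- (p * e)).
Proof.
  intros He.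
  rewrite (RInt_by_parts logphiT dlogphiT (fun s => exp (- (p * s)))
                         (fun s => - p * exp (- (p * s))));
    try (intros; lra).
  - rewrite (RInt_ext _ (fun s => - p * logphiT_exp p s))
      by (intros; unfold logphiT_exp; R_eq; ring).
    rewrite RInt_scal_R by (apply ex_RInt_logphiT_exp; lra). lra.
  - intros x Hx. apply is_derive_logphiT. lra.
  - intros x _. auto_derive; [auto|ring].
  - intros x Hx. apply continuous_dlogphiT. lra.
  - intros x _. apply (continuous_scal_r (- p) (fun s => exp (- (p * s)))), continuous_exp_lin.
Qed.

(* The improper integral of [dlogphiT_exp p] over [(0, b]], in its integrated-by-parts form. *)
Definition laplace_dlogphiT (p b : R) : R :=
  p * RInt (logphiT_exp p) 0 b + logphiT b * exp (- (p * b)).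

Lemma ex_seq_to_0 b : 0 < b -> exists e : nat -> R, (forall m, 0 < e m <= b) /\ is_lim_seq e 0.
Proof.
  intros Hb. exists (fun m => b * / (2 + INR m)). split.
  - intro m. assert (0 <= INR m) by apply pos_INR.
    split; [apply Rmult_lt_0_compat; [lra|apply Rinv_0_lt_compat; lra]|].
    rewrite <- (Rmult_1_r b) at 2. apply Rmult_le_compat_l; [lra|].
    rewrite <- Rinv_1. apply Rinv_le_contravar; lra.
  - replace (Finite 0) with (Rbar_mult b 0) by (simpl; f_equal; ring).
    apply is_lim_seq_scal_l, is_lim_seq_inv_shift.
Qed.

Lemma is_lim_seq_laplace_dlogphiT p b (e : nat -> R) :
  (forall m, 0 < e m <= b) -> is_lim_seq e 0 ->
  is_lim_seq (fun m => RInt (dlogphiT_exp p) (e m) b) (laplace_dlogphiT p b).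
Proof.
  intros He Le.
  apply (is_lim_seq_ext (fun m => p * (RInt (logphiT_exp p) 0 b - RInt (logphiT_exp p) 0 (e m))
                                  + logphiT b * exp (- (p * b)) - logphiT_exp p (e m))).
  { intro m. specialize (He m). rewrite RInt_dlogphiT_exp_by_parts by lra.
    rewrite <- (RInt_Chasles_R (logphiT_exp p) 0 (e m) b)
      by (apply ex_RInt_logphiT_exp; lra).
    unfold logphiT_exp. lra. }
  replace (Finite (laplace_dlogphiT p b))
    with (Finite (p * (RInt (logphiT_exp p) 0 b - 0) + logphiT b * exp (- (p * b))
                  - logphiT_exp p 0))
    by (unfold laplace_dlogphiT, logphiT_exp; rewrite logphiT_0; f_equal; ring).
  assert (C0 : continuity_pt (logphiT_exp p) 0)
    by (apply continuity_pt_filterlim, continuous_logphiT_exp; lra).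
  apply is_lim_seq_minus'; [apply is_lim_seq_plus'|].
  - apply (is_lim_seq_scal_l _ p (RInt (logphiT_exp p) 0 b - 0)).
    apply is_lim_seq_minus'; [apply is_lim_seq_const|].
    apply is_lim_seq_RInt_shrinking; auto.
    + intro m. specialize (He m). lra.
    + intro m. specialize (He m). apply ex_RInt_logphiT_exp; lra.
  - apply is_lim_seq_const.
  - now apply is_lim_seq_continuous.
Qed.

Lemma is_lim_seq_Rabs_le u (l K : R) :
  is_lim_seq u l -> (forall n, Rabs (u n) <= K) -> Rabs l <= K.
Proof.
  intros Hu HK. apply (is_lim_seq_le (fun n => Rabs (u n)) (fun _ => K) (Rabs l) K); auto.
  - now apply (is_lim_seq_abs u l).
  - apply is_lim_seq_const.
Qed.

Lemma Rabs_RInt_dlogphiT_exp_le p e b : 0 < p -> 0 < e <= b ->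
  Rabs (RInt (dlogphiT_exp p) e b) <= 2 / p.
Proof.
  intros Hp He.
  assert (Ik := ex_RInt_dlogphiT_exp p e b ltac:(lra) ltac:(lra)).
  assert (IE : ex_RInt (fun s => 2 * exp (- (p * s))) e b)
    by apply (ex_RInt_scal (fun s => exp (- (p * s)))), ex_RInt_exp_lin.
  assert (Bk : forall s, e < s < b -> Rabs (dlogphiT_exp p s) <= 2 * exp (- (p * s))).
  { intros s Hs. unfold dlogphiT_exp.
    rewrite Rabs_mult, (Rabs_right (exp _)) by (left; apply exp_pos).
    apply Rmult_le_compat_r; [left; apply exp_pos|]. apply Rabs_dlogphiT_le. lra. }
  assert (U : RInt (dlogphiT_exp p) e b <= RInt (fun s => 2 * exp (- (p * s))) e b).
  { apply RInt_le; auto; [lra|].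
    intros s Hs. specialize (Bk s Hs). apply Rabs_le_between in Bk. lra. }
  assert (L : RInt (fun s => - (2 * exp (- (p * s)))) e b <= RInt (dlogphiT_exp p) e b).
  { apply RInt_le; auto; [lra|now apply (ex_RInt_opp (fun s => 2 * exp (- (p * s))))|].
    intros s Hs. specialize (Bk s Hs). apply Rabs_le_between in Bk. lra. }
  rewrite (RInt_opp (fun s => 2 * exp (- (p * s)))) in L by exact IE.
  rewrite RInt_scal_R, RInt_exp_lin in U, L by (try apply ex_RInt_exp_lin; lra).
  assert (B : (exp (- (p * e)) - exp (- (p * b))) / p <= / p).
  { assert (0 < exp (- (p * b))) by apply exp_pos.
    assert (exp (- (p * e)) < 1) by (rewrite <- exp_0; apply exp_increasing; nra).
    unfold Rdiv. rewrite <- (Rmult_1_l (/ p)) at 2.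
    apply Rmult_le_compat_r; [left; apply Rinv_0_lt_compat|]; lra. }
  unfold opp in L; simpl in L. apply Rabs_le. unfold Rdiv. lra.
Qed.

Lemma Rabs_laplace_dlogphiT_le p b : 0 < p -> 0 < b -> Rabs (laplace_dlogphiT p b) <= 2 / p.
Proof.
  intros Hp Hb. destruct (ex_seq_to_0 b Hb) as [e [He Le]].
  apply (is_lim_seq_Rabs_le _ _ _ (is_lim_seq_laplace_dlogphiT p b e He Le)).
  intro m. now apply Rabs_RInt_dlogphiT_exp_le.
Qed.

Lemma exp_mult_INR a j : exp (a * INR j) = exp a ^ j.
Proof.
  induction j as [|j IH]; [simpl; now rewrite Rmult_0_r, exp_0|].
  rewrite S_INR, Rmult_plus_distr_l, Rmult_1_r, exp_plus, IH. simpl. ring.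
Qed.

Definition digamma_approx (t : R) (n : nat) : R :=
  4 * sum_f_R0 (fun j => / (t + 2 + 4 * INR j)) n - (ln (t + 4 * INR (S n)) - ln t).

Section Truncation.

Variables (t : R) (n : nat).
Hypothesis t_pos : 0 < t.

Let q := t + 4 * INR (S n).
Let c (j : nat) := t + 2 + 4 * INR j.

Let q_gt_t : t < q.
Proof. unfold q. assert (0 < INR (S n)) by (apply lt_0_INR; lia). lra. Qed.

Let c_gt_t j : t < c j.
Proof. unfold c. assert (0 <= INR j) by apply pos_INR. lra. Qed.

(* [2 / sinh (2 s) = 4 e^{-2s} / (1 - e^{-4s})] expanded as a geometric series, truncated. *)
Lemma dlogphiT_geometric s : 0 < s ->
  dlogphiT s * (exp (- (t * s)) - exp (- (q * s))) =
  4 * sum_f_R0 (fun j => exp (- (c j * s))) n - (exp (- (t * s)) - exp (- (q * s))) / s.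
Proof.
  intros Hs. set (r := exp (- (4 * s))).
  assert (Hr : r < 1) by (unfold r; rewrite <- exp_0; apply exp_increasing; lra).
  assert (Ec : forall j, exp (- (c j * s)) = r ^ j * (exp (- (t * s)) * exp (- (2 * s)))).
  { intro j. unfold r, c. rewrite <- exp_mult_INR, <- !exp_plus. f_equal. ring. }
  assert (Eq : exp (- (q * s)) = exp (- (t * s)) * r ^ S n).
  { unfold r, q. rewrite <- exp_mult_INR, <- exp_plus. f_equal. ring. }
  assert (Esh : sinh (2 * s) = (1 - r) / (2 * exp (- (2 * s)))).
  { unfold sinh, r. replace (4 * s) with (2 * s + 2 * s) by ring.
    rewrite Ropp_plus_distr, exp_plus, exp_Ropp. field. apply Rgt_not_eq, exp_pos. }
  rewrite (sum_eq _ _ _ (fun j _ => Ec j)), <- scal_sum, tech3 by lra.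
  unfold dlogphiT. rewrite Esh, Eq.
  assert (0 < exp (- (2 * s))) by apply exp_pos.
  field. lra.
Qed.

Lemma RInt_dlogphiT_exp_diff e b : 0 < e <= b ->
  RInt (dlogphiT_exp t) e b - RInt (dlogphiT_exp q) e b =
  4 * sum_f_R0 (fun j => (exp (- (c j * e)) - exp (- (c j * b))) / c j) n
  - (RInt E1_integrand (t * e) (q * e) - RInt E1_integrand (t * b) (q * b)).
Proof.
  intros He. assert (Hq := q_gt_t).
  rewrite <- RInt_minus_R by (apply ex_RInt_dlogphiT_exp; lra).
  rewrite (RInt_ext _ (fun s => 4 * sum_f_R0 (fun j => exp (- (c j * s))) n
                                - (exp (- (t * s)) - exp (- (q * s))) / s)).
  2:{ intros x Hx. assert (0 < x) by (apply (Rmin_pos_le e b); lra).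
      unfold dlogphiT_exp. rewrite <- dlogphiT_geometric by lra. R_eq. ring. }
  assert (Ic : forall j, ex_RInt (fun s => exp (- (c j * s))) e b)
    by (intros; apply ex_RInt_exp_lin).
  rewrite RInt_minus_R.
  - rewrite RInt_scal_R, RInt_sum_f_R0 by (try apply ex_RInt_sum_f_R0; auto).
    rewrite RInt_frullani by lra.
    f_equal. f_equal. apply sum_eq. intros j _.
    apply RInt_exp_lin. generalize (c_gt_t j). lra.
  - apply (ex_RInt_scal (fun s => sum_f_R0 (fun j => exp (- (c j * s))) n)).
    now apply ex_RInt_sum_f_R0.
  - apply (ex_RInt_ext (fun s => exp (- (t * s)) / s - exp (- (q * s)) / s));
      [intros x _; R_eq; unfold Rdiv; ring|].
    apply (ex_RInt_minus (fun s => exp (- (t * s)) / s)); apply ex_RInt_exp_lin_div; lra.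
Qed.

Lemma laplace_dlogphiT_diff b : 0 < b ->
  laplace_dlogphiT t b - laplace_dlogphiT q b =
  4 * sum_f_R0 (fun j => (1 - exp (- (c j * b))) / c j) n
  - ((ln q - ln t) - RInt E1_integrand (t * b) (q * b)).
Proof.
  intros Hb. destruct (ex_seq_to_0 b Hb) as [e [He Le]].
  apply (is_lim_seq_unique_R (fun m =>
    RInt (dlogphiT_exp t) (e m) b - RInt (dlogphiT_exp q) (e m) b)).
  { apply is_lim_seq_minus'; now apply is_lim_seq_laplace_dlogphiT. }
  apply (is_lim_seq_ext (fun m =>
    4 * sum_f_R0 (fun j => (exp (- (c j * e m)) - exp (- (c j * b))) / c j) n
    - (RInt E1_integrand (t * e m) (q * e m) - RInt E1_integrand (t * b) (q * b)))).
  { intro m. symmetry. apply RInt_dlogphiT_exp_diff, He. }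
  apply is_lim_seq_minus'; [apply (is_lim_seq_scal_l _ 4 (sum_f_R0 _ n))|apply is_lim_seq_minus'].
  - apply is_lim_seq_sum_f_R0. intro j.
    apply (is_lim_seq_scal_r _ (/ c j) (1 - exp (- (c j * b)))).
    apply is_lim_seq_minus'; [apply is_lim_seq_exp_lin, Le|apply is_lim_seq_const].
  - apply is_lim_seq_RInt_E1_integrand_near_0; auto using q_gt_t.
    intro m. apply He.
  - apply is_lim_seq_const.
Qed.

Lemma Rabs_laplace_dlogphiT_diff_le b : 0 < b ->
  Rabs (laplace_dlogphiT t b - laplace_dlogphiT q b - digamma_approx t n)
  <= 4 * INR (S n) * (exp (- (t * b)) / t).
Proof.
  intros Hb. rewrite laplace_dlogphiT_diff by exact Hb. unfold digamma_approx. fold q.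
  assert (Hq := q_gt_t).
  assert (Tail : 0 <= sum_f_R0 (fun j => exp (- (c j * b)) / c j) n
                 <= INR (S n) * (exp (- (t * b)) / t)).
  { apply sum_f_R0_bounds. intro j. assert (Hc := c_gt_t j). split.
    - apply Rlt_le, Rdiv_lt_0_compat; [apply exp_pos|lra].
    - unfold Rdiv. apply Rmult_le_compat.
      + left; apply exp_pos.
      + left; apply Rinv_0_lt_compat; lra.
      + left. apply exp_increasing. nra.
      + apply Rinv_le_contravar; lra. }
  assert (Far := RInt_E1_integrand_far t q b (conj t_pos Hq) Hb).
  replace ((q - t) / t) with (4 * INR (S n) / t) in Far by (unfold q; field; lra).
  rewrite (sum_eq (fun j => (1 - exp (- (c j * b))) / c j)
                  (fun j => / (t + 2 + 4 * INR j) - exp (- (c j * b)) / c j))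
    by (intros; unfold c, Rdiv; ring).
  rewrite minus_sum. apply Rabs_le. unfold Rdiv in *. lra.
Qed.

End Truncation.

Lemma digamma_approx_eq t n : 0 < t ->
  digamma_approx t n = ln (t / 4) - digamma_seq (t / 4 + 1 / 2) n
                       - (ln (INR n + (t / 4 + 1)) - ln (INR n)).
Proof.
  intros Ht. unfold digamma_approx, digamma_seq.
  rewrite scal_sum, (sum_eq _ (fun k => / (t / 4 + 1 / 2 + INR k)))
    by (intros j _; assert (0 <= INR j) by apply pos_INR; field; lra).
  replace (t + 4 * INR (S n)) with (4 * (INR n + (t / 4 + 1))) by (rewrite S_INR; field).
  replace (ln t) with (ln (4 * (t / 4))) by (f_equal; field).
  assert (0 <= INR n) by apply pos_INR.
  rewrite !ln_mult by lra. ring.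
Qed.

Lemma is_lim_seq_digamma_approx t : 0 < t ->
  is_lim_seq (digamma_approx t) (ln (t / 4) - digamma (t / 4 + 1 / 2)).
Proof.
  intros Ht.
  apply (is_lim_seq_ext (fun n => ln (t / 4) - digamma_seq (t / 4 + 1 / 2) n
                                  - (ln (INR n + (t / 4 + 1)) - ln (INR n)))).
  { intro n. symmetry. now apply digamma_approx_eq. }
  replace (Finite (ln (t / 4) - digamma (t / 4 + 1 / 2)))
    with (Finite (ln (t / 4) - digamma (t / 4 + 1 / 2) - 0)) by (f_equal; ring).
  apply is_lim_seq_minus'; [apply is_lim_seq_minus'|].
  - apply is_lim_seq_const.
  - apply is_lim_seq_digamma. lra.
  - apply is_lim_seq_ln_shift. lra.
Qed.

Lemma is_lim_neg_lin c : 0 < c -> is_lim (fun b => - (c * b)) p_infty m_infty.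
Proof.
  intros Hc.
  assert (H := is_lim_opp _ _ _ (is_lim_scal_l _ c _ _ (is_lim_id p_infty))).
  simpl in H. destruct (Rle_dec 0 c) as [Hc'|]; [|lra].
  destruct (Rle_lt_or_eq_dec 0 c Hc'); [exact H|lra].
Qed.

Lemma is_lim_exp_neg_lin c : 0 < c -> is_lim (fun b => exp (- (c * b))) p_infty 0.
Proof.
  intros Hc. apply (is_lim_comp exp _ _ _ m_infty is_lim_exp_m (is_lim_neg_lin c Hc)).
  exists 0. discriminate.
Qed.

Lemma is_lim_mul_exp_neg_lin c : 0 < c -> is_lim (fun b => b * exp (- (c * b))) p_infty 0.
Proof.
  intros Hc.
  apply (is_lim_ext (fun b => (- / c) * (- (c * b) * exp (- (c * b))))).
  { intro b. field. lra. }
  replace (Finite 0) with (Rbar_mult (- / c) 0) by (simpl; f_equal; ring).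
  apply is_lim_scal_l.
  apply (is_lim_comp (fun y => y * exp y) _ _ _ m_infty is_lim_mul_exp_m (is_lim_neg_lin c Hc)).
  exists 0. discriminate.
Qed.

Lemma is_lim_seq_truncation_error t : 0 < t ->
  is_lim_seq (fun n => 2 / (t + 4 * INR (S n))
                       + Rabs (digamma_approx t n - (ln (t / 4) - digamma (t / 4 + 1 / 2)))) 0.
Proof.
  intros Ht. replace (Finite 0) with (Finite (/ 2 * 0 + 0)) by (f_equal; ring).
  apply is_lim_seq_plus'.
  - apply (is_lim_seq_ext (fun n => / 2 * / (t / 4 + 1 + INR n))).
    { intro n. rewrite S_INR. field. generalize (pos_INR n). lra. }
    apply (is_lim_seq_scal_l _ (/ 2) 0), is_lim_seq_inv_shift.
  - apply (is_lim_seq_abs_0 (fun n =>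
      digamma_approx t n - (ln (t / 4) - digamma (t / 4 + 1 / 2)))).
    replace (Finite 0) with (Finite ((ln (t / 4) - digamma (t / 4 + 1 / 2))
                                     - (ln (t / 4) - digamma (t / 4 + 1 / 2)))) by (f_equal; ring).
    apply is_lim_seq_minus'; [now apply is_lim_seq_digamma_approx|apply is_lim_seq_const].
Qed.

(* Write [A := laplace_dlogphiT], [S_n := digamma_approx t n], [q := t + 4 (n + 1)] and bound
   [|A t b - l|] by [|A t b - A q b - S_n| + |A q b| + |S_n - l|]: the last two terms are small
   for a suitable [n], and then the first for large [b]. *)
Lemma is_lim_laplace_dlogphiT t : 0 < t ->
  is_lim (laplace_dlogphiT t) p_infty (ln (t / 4) - digamma (t / 4 + 1 / 2)).
Proof.
  intros Ht. set (l := ln (t / 4) - digamma (t / 4 + 1 / 2)).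
  apply is_lim_spec. intros eps.
  destruct (proj2 (is_lim_seq_spec _ _) (is_lim_seq_truncation_error t Ht) (pos_div_2 eps))
    as [n Hn].
  specialize (Hn n (le_n n)). fold l in Hn.
  rewrite Rminus_0_r in Hn. apply Rabs_def2 in Hn as [Hn _].
  assert (HS : 0 < INR (S n)) by apply lt_0_INR, Nat.lt_0_succ.
  assert (Le : is_lim (fun b => 4 * INR (S n) * (exp (- (t * b)) / t)) p_infty 0).
  { apply (is_lim_ext (fun b => 4 * INR (S n) / t * exp (- (t * b))));
      [intro b; field; lra|].
    replace (Finite 0) with (Rbar_mult (4 * INR (S n) / t) 0) by (simpl; f_equal; ring).
    now apply is_lim_scal_l, is_lim_exp_neg_lin. }
  destruct (proj2 (is_lim_spec _ _ _) Le (pos_div_2 eps)) as [M HM].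
  exists (Rmax M 0). intros b Hb.
  assert (Hb0 : 0 < b) by (apply (Rle_lt_trans _ (Rmax M 0)); [apply Rmax_r|exact Hb]).
  specialize (HM b (Rle_lt_trans _ _ _ (Rmax_l M 0) Hb)).
  rewrite Rminus_0_r in HM. apply Rabs_def2 in HM as [HM _].
  assert (D := Rabs_laplace_dlogphiT_diff_le t n Ht b Hb0).
  assert (B := Rabs_laplace_dlogphiT_le (t + 4 * INR (S n)) b ltac:(lra) Hb0).
  replace (laplace_dlogphiT t b - l) with
    ((laplace_dlogphiT t b - laplace_dlogphiT (t + 4 * INR (S n)) b - digamma_approx t n)
     + laplace_dlogphiT (t + 4 * INR (S n)) b + (digamma_approx t n - l)) by ring.
  eapply Rle_lt_trans; [apply Rabs_triang|].
  eapply Rle_lt_trans; [apply Rplus_le_compat_r, Rabs_triang|].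
  cbn [pos pos_div_2] in Hn, HM. lra.
Qed.

Lemma is_lim_logphiT_exp_boundary t : 0 < t ->
  is_lim (fun b => logphiT b * exp (- (t * b))) p_infty 0.
Proof.
  intros Ht.
  assert (L := is_lim_mul_exp_neg_lin t Ht).
  apply (is_lim_le_le_loc (fun b => - 2 * (b * exp (- (t * b))))
                          (fun b => 2 * (b * exp (- (t * b))))).
  - exists 0. intros b Hb. assert (H := Rabs_logphiT_le b Hb).
    apply Rabs_le_between in H. assert (0 < exp (- (t * b))) by apply exp_pos. nra.
  - replace (Finite 0) with (Rbar_mult (- 2) 0) by (simpl; f_equal; ring).
    now apply is_lim_scal_l.
  - replace (Finite 0) with (Rbar_mult 2 0) by (simpl; f_equal; ring).
    now apply is_lim_scal_l.
Qed.

Lemma is_lim_RInt_logphiT_exp t : 0 < t ->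
  is_lim (fun b => RInt (logphiT_exp t) 0 b) p_infty
    ((ln (t / 4) - digamma (t / 4 + 1 / 2)) / t).
Proof.
  intros Ht.
  apply (is_lim_ext (fun b => / t * (laplace_dlogphiT t b - logphiT b * exp (- (t * b))))).
  { intro b. unfold laplace_dlogphiT. field. lra. }
  replace (Finite ((ln (t / 4) - digamma (t / 4 + 1 / 2)) / t))
    with (Rbar_mult (/ t) (ln (t / 4) - digamma (t / 4 + 1 / 2) - 0))
    by (simpl; f_equal; field; lra).
  apply is_lim_scal_l, (is_lim_minus _ _ _ (ln (t / 4) - digamma (t / 4 + 1 / 2)) 0).
  - now apply is_lim_laplace_dlogphiT.
  - now apply is_lim_logphiT_exp_boundary.
  - reflexivity.
Qed.

Lemma improper_int_0_infty_is_lim f (l : R) :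
  (forall b, 0 <= b -> ex_RInt f 0 b) -> is_lim (fun b => RInt f 0 b) p_infty l ->
  improper_int_0_infty f l.
Proof.
  intros I L. split.
  - intros b Hb. constructor. now apply ex_RInt_Reals_0, I.
  - intros eps Heps. apply is_lim_spec in L. destruct (L (mkposreal eps Heps)) as [M HM].
    exists (Rmax M 0 + 1). intros b pr Hb. rewrite <- RInt_Reals. apply HM.
    generalize (Rmax_l M 0). lra.
Qed.

Lemma free_V_im_logphiT t : 0 < t ->
  free_V_im logphiT t (t * (ln (t / 4) - digamma (t / 4 + 1 / 2))).
Proof.
  intros Ht. exists ((ln (t / 4) - digamma (t / 4 + 1 / 2)) / t). split.
  - apply improper_int_0_infty_is_lim.
    + intros b Hb. apply ex_RInt_logphiT_exp; lra.
    + now apply is_lim_RInt_logphiT_exp.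
  - field. lra.
Qed.

Theorem corollary4 :
  (forall t : R, 0 < t ->
     free_V_im logphiT t (t * (ln (t / 2) - beta_fun (t / 2) - digamma (t / 2)))
  /\ free_V_im logphiT t (t * (ln (t / 4) - digamma (t / 4 + 1 / 2)))) /\
  (forall s : R, 0 < s ->
     2 * digamma (2 * s) - digamma s - digamma (s + 1 / 2) = 2 * ln 2).
Proof.
  split.
  - intros t Ht. rewrite free_V_forms_agree by exact Ht.
    split; now apply free_V_im_logphiT.
  - exact digamma_duplication.
Qed.
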